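(* Let $\phi=\sum_{n=-\infty}^{\infty}a_ne_n\in L^\infty$ and suppose $V_\phi^*$ is an isometry on $H^2$. Then $\sum_{n=-\infty}^{\infty}|a_n|^2=1$.
   Context: $L^2=L^2(\mathbb{T})$ with orthonormal basis $e_n(z)=z^n$, $n\in\mathbb{Z}$; $H^2$ is the closed span of $\{e_n\}_{n\ge0}$, $P:L^2\to H^2$ the orthogonal projection, $M_\phi$ multiplication by $\phi$. $W:L^2\to L^2$: $We_n=e_{n/2}$ for $n$ even, $0$ for $n$ odd. $K:H^2\to L^2$: $Ke_{2n}=e_n$, $Ke_{2n+1}=e_{-n-1}$ ($n\ge0$). The slant H-Toeplitz operator is $V_\phi=WPM_\phi K:H^2\to H^2$. *)

From HB Require Import structures.
From mathcomp Require Import all_boot all_order all_algebra.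
From mathcomp Require Import complex.
From mathcomp Require Import all_classical all_reals all_analysis.
Set Implicit Arguments. Unset Strict Implicit. Unset Printing Implicit Defensive.
Import Order.TTheory GRing.Theory Num.Theory.
Import numFieldNormedType.Exports.
Local Open Scope classical_set_scope.
Local Open Scope ring_scope.
Local Open Scope complex_scope.

Section Defs.
Variable R : realType.
Local Notation C := R[i].

Definition cconj (z : C) : C := complex.Re z -i* complex.Im z.
Definition cnorm2 (z : C) : R := complex.Re z ^+ 2 + complex.Im z ^+ 2.

(** value of a complex series over nat (defined componentwise via [lim];
    meaningful when the series converges) *)
Definition csum (u : nat -> C) : C :=
  (lim (series (fun n => complex.Re (u n)) @ \oo)) +i* (lim (series (fun n => complex.Im (u n)) @ \oo)).

(** value of a complex series indexed by int: terms n and -n-1 grouped *)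
Definition zsum (f : int -> C) : C := csum (fun n => f (Posz n) + f (Negz n)).

Definition zsum_to (f : int -> R) (l : R) : Prop :=
  series (fun n => f (Posz n) + f (Negz n)) @ \oo --> l.

(** L^2 = L^2(T) is modelled, via the orthonormal basis (e_n)_{n in Z},
    by sequences int -> C (coefficient of e_n); H^2 by sequences nat -> C
    (coefficient of e_n, n >= 0). *)
Definition inH2 (x : nat -> C) : Prop :=
  cvg (series (fun n => cnorm2 (x n)) @ \oo).

Definition H2norm2 (x : nat -> C) : R := lim (series (fun n => cnorm2 (x n)) @ \oo).

Definition H2inner (x y : nat -> C) : C := csum (fun n => x n * cconj (y n)).

(** Fourier coefficients of phi : T -> C, where T is parametrized by
    t in [0, 2pi] (phi t stands for phi(e^{it})), w.r.t. normalized Lebesgue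
    measure:  a_n = (1/2pi) int_0^{2pi} phi(t) e^{-int} dt. *)
Definition fourier (phi : R -> C) (n : int) : C :=
  let mu := @lebesgue_measure R in
  let D := `[0, pi *+ 2]%classic in
  ((pi *+ 2)^-1 * Rintegral mu D
      (fun t => complex.Re (phi t) * cos (n%:~R * t) + complex.Im (phi t) * sin (n%:~R * t)))
  +i*
  ((pi *+ 2)^-1 * Rintegral mu D
      (fun t => complex.Im (phi t) * cos (n%:~R * t) - complex.Re (phi t) * sin (n%:~R * t))).

Definition Linfty (phi : R -> C) : Prop :=
  measurable_fun `[0, pi *+ 2]%classic (fun t => complex.Re (phi t)) /\
  measurable_fun `[0, pi *+ 2]%classic (fun t => complex.Im (phi t)) /\
  exists M : R, {ae @lebesgue_measure R, forall t,
     `[0, pi *+ 2]%classic t -> cnorm2 (phi t) <= M}.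

(* K : H^2 -> L^2,  K e_{2n} = e_n,  K e_{2n+1} = e_{-n-1} *)
Definition Kop (x : nat -> C) : int -> C :=
  fun k => match k with Posz n => x (n.*2) | Negz n => x (n.*2).+1 end.
(* M_phi : multiplication by phi = sum_n a_n e_n; since e_n e_m = e_{n+m},
   the coefficient of e_k in phi*y is sum_m a_{k-m} y_m *)
Definition Mop (a : int -> C) (y : int -> C) : int -> C :=
  fun k => zsum (fun m => a (k - m) * y m).
(* P : L^2 -> H^2, orthogonal projection (kept inside L^2 coordinates) *)
Definition Pop (y : int -> C) : int -> C :=
  fun k => if (0 <= k)%R then y k else 0.
(* W : W e_n = e_{n/2} (n even), 0 (n odd); coefficient of e_k in Wy is y_{2k} *)
Definition Wop (y : int -> C) : int -> C := fun k => y (k *+ 2).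
Definition toH2 (y : int -> C) : nat -> C := fun n => y (Posz n).

Definition Vop (phi : R -> C) (x : nat -> C) : nat -> C :=
  toH2 (Wop (Pop (Mop (fourier phi) (Kop x)))).

End Defs.

From HB Require Import structures.
From mathcomp Require Import all_boot all_order all_algebra.
From mathcomp Require Import complex.
From mathcomp Require Import all_classical all_reals all_analysis.
From mathcomp Require Import lra.
Import Order.TTheory GRing.Theory Num.Theory.
Import numFieldNormedType.Exports.
Local Open Scope classical_set_scope.
Local Open Scope ring_scope.

(* Testing the adjoint identity <V e_j, e_0> = <e_j, V* e_0> against the
   basis shows that the j-th coefficient of V* e_0 is the conjugate of the
   0-th coefficient of V e_j.  Since K e_j = e_(k j), where k enumerates Z as
   0, -1, 1, -2, 2, ..., that coefficient is a_(-k j).  Hence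
   ||V* e_0||^2 = sum_j |a_(-k j)|^2, a rearrangement of sum_n |a_n|^2 whose
   partial sums differ from those of the symmetric grouping by a single
   vanishing term, while the isometry gives ||V* e_0||^2 = ||e_0||^2 = 1. *)

Lemma cvg_double_index (T : ptopologicalType) (u : nat -> T) (l : T) :
  u @ \oo --> l -> (fun n => u n.*2) @ \oo --> l.
Proof.
have -> : (fun n => u n.*2) = u \o muln 2 by apply/funext => n; rewrite /= mul2n.
by apply: cvg_comp; apply: cvg_mulnl.
Qed.

Section SlantHToeplitz.
Variable R : realType.
Local Notation C := R[i].

Lemma cvg_series_delta (f : nat -> R) j :
  (forall n, n != j -> f n = 0) -> series f @ \oo --> f j.
Proof.
move=> f0; apply: cvg_near_cst; exists j.+1 => // N /= ltjN.
rewrite /series /= big_mkord (bigD1 (Ordinal ltjN)) //= big1 ?addr0 // => i neij.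
by apply: f0; apply: contra neij => /eqP eij; apply/eqP/val_inj.
Qed.

Lemma csum_delta (u : nat -> C) j : (forall n, n != j -> u n = 0) -> csum u = u j.
Proof.
move=> u0; rewrite /csum.
have [Re0 Im0] : (forall n, n != j -> complex.Re (u n) = 0) /\
                (forall n, n != j -> complex.Im (u n) = 0) by split=> n /u0 ->.
rewrite (cvg_lim (@Rhausdorff R) (@cvg_series_delta _ j Re0)).
by rewrite (cvg_lim (@Rhausdorff R) (@cvg_series_delta _ j Im0)); case: (u j).
Qed.

Definition hbasis (j : nat) : nat -> C := fun n => (n == j)%:R.

Lemma cnorm2_hbasis j n : cnorm2 (hbasis j n) = (n == j)%:R.
Proof. by rewrite /hbasis /cnorm2; case: eqP; rewrite /= ?expr1n expr0n addr0. Qed.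

Lemma cvg_series_cnorm2_hbasis j :
  series (fun n => cnorm2 (hbasis j n)) @ \oo --> (1 : R).
Proof.
have := @cvg_series_delta (fun n => cnorm2 (hbasis j n)) j.
rewrite cnorm2_hbasis eqxx; apply=> n neq.
by rewrite cnorm2_hbasis (negbTE neq).
Qed.

Lemma inH2_hbasis j : inH2 (hbasis j).
Proof. by apply/cvg_ex; exists (1 : R); apply: cvg_series_cnorm2_hbasis. Qed.

Lemma H2norm2_hbasis j : H2norm2 (hbasis j) = 1.
Proof. exact/(cvg_lim (@Rhausdorff R) (cvg_series_cnorm2_hbasis j)). Qed.

Lemma H2inner_hbasisl j y : H2inner (hbasis j) y = cconj (y j).
Proof.
rewrite /H2inner (@csum_delta _ j) /hbasis ?eqxx ?mul1r // => n /negbTE->.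
by rewrite mul0r.
Qed.

Lemma cconj_hbasis j n : cconj (hbasis j n) = hbasis j n.
Proof.
by rewrite /hbasis; case: eqP => _; apply/eqP; rewrite eq_complex /= oppr0 !eqxx.
Qed.

Lemma H2inner_hbasisr x j : H2inner x (hbasis j) = x j.
Proof.
rewrite /H2inner (@csum_delta _ j) /=.
  by rewrite cconj_hbasis /hbasis eqxx mulr1.
by move=> n /negbTE neq; rewrite cconj_hbasis /hbasis neq mulr0.
Qed.

Lemma cnorm2_cconj (z : C) : cnorm2 (cconj z) = cnorm2 z.
Proof. by rewrite /cnorm2 /= sqrrN. Qed.

Definition kindex (j : nat) : int := if odd j then Negz j./2 else Posz j./2.

Lemma kindex_double p : kindex p.*2 = p.
Proof. by rewrite /kindex odd_double doubleK. Qed.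

Lemma kindex_doubleS p : kindex p.*2.+1 = Negz p.
Proof. by rewrite /kindex /= odd_double uphalf_double. Qed.

Lemma Kop_hbasis j : Kop (hbasis j) = fun k => (k == kindex j)%:R.
Proof.
apply/funext => k.
have eq_double := inj_eq (can_inj doubleK).
have neq_doubleS m n : (m.*2.+1 == n.*2) = false.
  by apply/negbTE; apply: contraTneq isT => /(congr1 odd); rewrite /= !odd_double.
rewrite -[j]odd_double_half; move: (j./2) => p; case: (odd j) => /=;
  rewrite ?add0n ?add1n ?kindex_double ?kindex_doubleS /Kop /hbasis; case: k => n /=.
- by rewrite eq_sym neq_doubleS.
- by rewrite eqSS eq_double.
- by rewrite eq_double.
- by rewrite neq_doubleS.
Qed.

Lemma zsum_delta (g : int -> C) m : zsum (fun i => g i * (i == m)%:R) = g m.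
Proof.
case: m => p; rewrite /zsum (@csum_delta _ p) /= ?eqxx ?mulr1 ?mulr0 ?addr0 ?add0r //.
all: by move=> n /negbTE neq; rewrite -[_ == _ :> int]/(n == p) neq !mulr0 addr0.
Qed.

Lemma Vop_hbasis phi j k :
  Vop phi (hbasis j) k = fourier phi (k%:Z *+ 2 - kindex j).
Proof. by rewrite /Vop /toH2 /Wop /Pop /= /Mop Kop_hbasis zsum_delta. Qed.

Lemma zsum_to_series_kindex (f : int -> R) (l : R) :
  series (fun j => f (- kindex j)) @ \oo --> l -> zsum_to f l.
Proof.
move=> cvg_g; pose g j := f (- kindex j).
have g_double p : g p.*2 = f (- p%:Z) by rewrite /g kindex_double.
have g_doubleS p : g p.*2.+1 = f p.+1 by rewrite /g kindex_doubleS NegzE opprK.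
have partial_sum N :
    series (fun n => f n + f (Negz n)) N.+1 = series g N.*2.+1 + g N.*2.+2.
  elim: N => [|N IH].
    rewrite !seriesSr /series /= !big_geq // -[2%N]/(1.*2) !g_double NegzE oppr0.
    by rewrite !add0r.
  rewrite seriesSr IH doubleS (seriesSr g N.*2.+2) (seriesSr g N.*2.+1).
  rewrite g_doubleS (g_double N.+2) NegzE.
  lra.
rewrite /zsum_to -cvg_shiftS.
have -> : [sequence series (fun n => f n + f (Negz n)) n.+1]_n =
          (fun N => series g N.*2.+1 + g N.*2.+2).
  by apply/funext => N; exact: partial_sum.
rewrite -[l]addr0; apply: cvgD.
  by apply: (@cvg_double_index _ (fun n => series g n.+1)); rewrite cvg_shiftS.
apply: (@cvg_double_index _ (fun n => g n.+2)).
rewrite (cvg_shiftS (fun n => g n.+1)) cvg_shiftS.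
exact/cvg_series_cvg_0/cvgP/cvg_g.
Qed.

End SlantHToeplitz.

Theorem mainTheorem4 (R : realType) (phi : R -> R[i]) (Vstar : (nat -> R[i]) -> (nat -> R[i])) :
  Linfty phi ->
  (* Vstar is the Hilbert-space adjoint of V_phi on H^2 *)
  (forall x, inH2 x -> inH2 (Vstar x)) ->
  (forall x y, inH2 x -> inH2 y -> H2inner (Vop phi x) y = H2inner x (Vstar y)) ->
  (* Vstar is an isometry on H^2 *)
  (forall x, inH2 x -> H2norm2 (Vstar x) = H2norm2 x) ->
  zsum_to (fun n => cnorm2 (fourier phi n)) 1.
Proof.
move=> _ Vstar_H2 adjoint isometry.
have coef_Vstar j :
    cnorm2 (Vstar (hbasis R 0) j) = cnorm2 (fourier phi (- kindex j)).
  rewrite -cnorm2_cconj -H2inner_hbasisl -adjoint; try exact: inH2_hbasis.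
  by rewrite H2inner_hbasisr Vop_hbasis mul0rn sub0r.
apply: zsum_to_series_kindex.
under eq_fun do rewrite -coef_Vstar.
rewrite -(H2norm2_hbasis R 0) -isometry; last exact: inH2_hbasis.
exact: Vstar_H2 (inH2_hbasis R 0).
Qed.
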